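(* Let $(R_x)_{x\in X}$ be a family of commutative rings indexed by a set $X$, let $R=\prod_{x\in X}R_x$, let $I$ be an ideal of the power set ring $\mathcal P(X)$, and let $I^*=\{f\in R:\operatorname{Su}(f)\in I\}$. (i) If each $R_x$ is a p.p. ring, then $R/I^*$ is a p.p. ring. (ii) If each $R_x$ is a p.f. ring, then $R/I^*$ is a p.f. ring.
   Context: $\mathcal P(X)$ is the Boolean ring of subsets of $X$ (addition symmetric difference, multiplication intersection). For $f=(f_x)\in R$, its support is $\operatorname{Su}(f)=\{x\in X: f_x\neq0\}$; $I^*$ is an ideal of $R$. A ring is p.p. (resp. p.f.) if every principal ideal is a projective (resp. flat) module. *)

From HB Require Import structures.
From mathcomp Require Import all_boot all_order all_algebra.
From mathcomp Require Import boolp classical_sets.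
From mathcomp Require Import generic_quotient ring_quotient.

Set Implicit Arguments.
Unset Strict Implicit.
Unset Printing Implicit Defensive.

Import GRing.Theory.
Local Open Scope ring_scope.
Local Open Scope classical_set_scope.

Definition dprod (X : Type) (R : X -> comPzRingType) := forall x : X, R x.

Section DProd.
Variables (X : Type) (R : X -> comPzRingType).
Local Notation P := (dprod R).

HB.instance Definition _ := Choice.copy P (forall x : X, R x).

Definition dp_zero : P := fun x => 0.
Definition dp_opp (f : P) : P := fun x => - f x.
Definition dp_add (f g : P) : P := fun x => f x + g x.
Definition dp_one : P := fun x => 1.
Definition dp_mul (f g : P) : P := fun x => f x * g x.

Lemma dp_addA : associative dp_add.
Proof. by move=> f g h; apply: functional_extensionality_dep => x; exact: addrA. Qed.
Lemma dp_addC : commutative dp_add.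
Proof. by move=> f g; apply: functional_extensionality_dep => x; exact: addrC. Qed.
Lemma dp_add0 : left_id dp_zero dp_add.
Proof. by move=> f; apply: functional_extensionality_dep => x; exact: add0r. Qed.
Lemma dp_addN : left_inverse dp_zero dp_opp dp_add.
Proof. by move=> f; apply: functional_extensionality_dep => x; exact: addNr. Qed.

HB.instance Definition _ := GRing.isZmodule.Build P dp_addA dp_addC dp_add0 dp_addN.

Lemma dp_mulA : associative dp_mul.
Proof. by move=> f g h; apply: functional_extensionality_dep => x; exact: mulrA. Qed.
Lemma dp_mulC : commutative dp_mul.
Proof. by move=> f g; apply: functional_extensionality_dep => x; exact: mulrC. Qed.
Lemma dp_mul1 : left_id dp_one dp_mul.
Proof. by move=> f; apply: functional_extensionality_dep => x; exact: mul1r. Qed.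
Lemma dp_mulDl : left_distributive dp_mul (@GRing.add P).
Proof. by move=> f g h; apply: functional_extensionality_dep => x; exact: mulrDl. Qed.

HB.instance Definition _ := GRing.Zmodule_isComPzRing.Build P
  dp_mulA dp_mulC dp_mul1 dp_mulDl.

Lemma dprod_addE (f g : P) x : (f + g) x = f x + g x. Proof. by []. Qed.
Lemma dprod_oppE (f : P) x : (- f) x = - f x. Proof. by []. Qed.
Lemma dprod_zeroE x : (0 : P) x = 0. Proof. by []. Qed.
Lemma dprod_mulE (f g : P) x : (f * g) x = f x * g x. Proof. by []. Qed.
Lemma dprod_oneE x : (1 : P) x = 1. Proof. by []. Qed.

Definition Su (f : P) : set X := [set x | f x != 0].

End DProd.

(* Ideals of the Boolean power-set ring P(X):                          *)
(*   addition = symmetric difference, multiplication = intersection.   *)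

Definition symdiff (X : Type) (A B : set X) : set X := (A `\` B) `|` (B `\` A).

Record PX_ideal (X : Type) := PXIdeal {
  PX_set : set (set X);
  PX_ideal0 : PX_set set0;
  PX_idealD : forall A B, PX_set A -> PX_set B -> PX_set (symdiff A B);
  PX_idealM : forall A B, PX_set B -> PX_set (A `&` B)
}.

Section IdealFacts.
Variables (X : Type) (I : PX_ideal X).

Lemma PX_ideal_sub (A B : set X) : B `<=` A -> PX_set I A -> PX_set I B.
Proof.
move=> BA IA; have -> : B = B `&` A by apply/seteqP; split=> x //=; [move=> Bx; split=> //; exact: BA|case].
exact: PX_idealM.
Qed.

Lemma PX_idealU (A B : set X) : PX_set I A -> PX_set I B -> PX_set I (A `|` B).
Proof.
move=> IA IB; have -> : A `|` B = symdiff (symdiff A B) (A `&` B).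
  apply/seteqP; split=> x /=; rewrite /symdiff /=.
    by case: (pselect (A x)); case: (pselect (B x)); intuition.
  by case: (pselect (A x)); case: (pselect (B x)); intuition.
by apply: PX_idealD; [exact: PX_idealD | exact: PX_idealM].
Qed.
End IdealFacts.

Section Istar.
Variables (X : Type) (R : X -> comPzRingType) (I : PX_ideal X).

Definition Istar : {pred dprod R} := fun f => `[< PX_set I (Su f) >].

Lemma IstarE (f : dprod R) : (f \in Istar) = `[< PX_set I (Su f) >].
Proof. by []. Qed.

Lemma Istar_zmod_closed : zmod_closed Istar.
Proof.
split.
  rewrite IstarE; apply/asboolP; have -> : Su (0 : dprod R) = set0.
    by apply/seteqP; split=> x //=; rewrite /Su /= eqxx.
  exact: PX_ideal0.
move=> u v; rewrite !IstarE => /asboolP Iu /asboolP Iv; apply/asboolP.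
apply: (PX_ideal_sub (A := Su u `|` Su v)); last exact: (PX_idealU Iu Iv).
move=> x; rewrite /Su /= => H.
case: (pselect (u x != 0)) => [|/negP]; first by left.
rewrite negbK => /eqP u0; right; apply: contra H => /eqP v0.
by rewrite dprod_addE dprod_oppE u0 v0 subrr.
Qed.

HB.instance Definition _ := GRing.isZmodClosed.Build (dprod R) Istar
  Istar_zmod_closed.

Lemma IstarMl (a u : dprod R) : u \in Istar -> a * u \in Istar.
Proof.
rewrite !IstarE => /asboolP Iu; apply/asboolP.
apply: (PX_ideal_sub (A := Su u)) => // x; rewrite /Su /= dprod_mulE.
by apply: contra => /eqP ->; rewrite mulr0.
Qed.

Local Open Scope quotient_scope.
Local Notation Q := (Quotient.quot Istar).

Definition qone : Q := lift_cst Q 1.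
Definition qmul := lift_op2 Q *%R.

Canonical pi_qone_morph := PiConst qone.

Lemma pi_qmul : {morph \pi_Q : x y / x * y >-> qmul x y}.
Proof.
move=> x y; unlock qmul; apply/eqP; rewrite piE Quotient.equivE.
rewrite -[_ * _](addrNK (x * repr (\pi_Q y))) -mulrBr.
rewrite -addrA -mulrBl rpredD //.
  by rewrite IstarMl // Quotient.idealrDE opprK reprK.
by rewrite mulrC IstarMl // Quotient.idealrDE opprK reprK.
Qed.
Canonical pi_qmul_morph := PiMorph2 pi_qmul.

Lemma qmulA : associative qmul.
Proof. by move=> x y z; rewrite -[x]reprK -[y]reprK -[z]reprK !piE mulrA. Qed.
Lemma qmulC : commutative qmul.
Proof. by move=> x y; rewrite -[x]reprK -[y]reprK !piE mulrC. Qed.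
Lemma qmul1 : left_id qone qmul.
Proof. by move=> x; rewrite -[x]reprK !piE mul1r. Qed.
Lemma qmulDl : left_distributive qmul +%R.
Proof.
move=> x y z; rewrite -[x]reprK -[y]reprK -[z]reprK.
by apply/eqP; rewrite piE /= mulrDl Quotient.equivE subrr rpred0.
Qed.

(* R / I^* as a commutative ring (possibly the zero ring when X \in I). *)
Definition quotIstar : Type := Q.
HB.instance Definition _ := GRing.Zmodule.on quotIstar.
HB.instance Definition _ := GRing.Zmodule_isComPzRing.Build quotIstar
  qmulA qmulC qmul1 qmulDl.

Definition piIstar (f : dprod R) : quotIstar := \pi_Q f.

End Istar.

(* Modules over S are MathComp's lmodType S.  The principal ideal aS   *)
(* is the S-submodule {r * a | r in S} of S; an S-linear map out of aS  *)
(* is represented by a function on S that is S-linear on aS.            *)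

Section Modules.
Variable S : comPzRingType.

Definition principal (a : S) : set S := [set x | exists r : S, x = r * a].

Definition is_lin (M N : lmodType S) (g : M -> N) : Prop :=
  forall (r : S) (x y : M), g (r *: x + y) = r *: g x + g y.

Definition lin_on (a : S) (M : lmodType S) (f : S -> M) : Prop :=
  forall (r : S) (x y : S), principal a x -> principal a y ->
    f (r * x + y) = r *: f x + f y.

Definition projective_principal (a : S) : Prop :=
  forall (M N : lmodType S) (g : N -> M) (f : S -> M),
    is_lin g -> (forall m : M, exists n : N, g n = m) -> lin_on a f ->
    exists h : S -> N, lin_on a h /\ forall y, principal a y -> g (h y) = f y.

Definition bilin_on (a : S) (N P : lmodType S) (b : N -> S -> P) : Prop :=
  (forall y, principal a y -> is_lin (fun n => b n y)) /\
  (forall n, lin_on a (b n)).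

(* The element  sum_i n_i (x) y_i  of  N (x)_S aS  is zero, expressed
   through the universal property of the tensor product: it is killed
   by every S-bilinear map out of N x aS. *)
Definition tensor_zero (a : S) (N : lmodType S) (s : seq (N * S)) : Prop :=
  forall (P : lmodType S) (b : N -> S -> P), bilin_on a b ->
    \sum_(p <- s) b p.1 p.2 = 0.

Definition flat_principal (a : S) : Prop :=
  forall (N' N : lmodType S) (iota : N' -> N),
    is_lin iota -> injective iota ->
    forall s : seq (N' * S), (forall p, p \in s -> principal a p.2) ->
      tensor_zero a [seq (iota p.1, p.2) | p <- s] -> tensor_zero a s.

Definition pp_ring : Prop := forall a : S, projective_principal a.
Definition pf_ring : Prop := forall a : S, flat_principal a.

End Modules.

(* A principal ideal aS is projective iff ann(a) = Se for some e, and flat iff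
   ann(a) is pure: every r with r a = 0 satisfies r = r s for some s with
   s a = 0.  Both criteria ask for witnesses satisfying equations, and an
   equation between elements of R holds modulo I^* as soon as the set of
   coordinates where it fails lies in I.  The witnesses e_x, s_x found in each
   R_x therefore assemble into witnesses in R/I^*; for purity, r_x a_x = 0 can
   only fail on Su(r a), which lies in I when r a vanishes in R/I^*. *)

From HB Require Import structures.
From mathcomp Require Import all_boot all_algebra.
From mathcomp Require Import boolp.
From mathcomp Require Import generic_quotient ring_quotient.

Set Implicit Arguments.
Unset Strict Implicit.
Unset Printing Implicit Defensive.

Import GRing.Theory.
Local Open Scope ring_scope.

Section IsLin.
Variables (S : comPzRingType) (M N : lmodType S) (g : M -> N).
Hypothesis gl : is_lin g.

Lemma is_linD x y : g (x + y) = g x + g y.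
Proof. by have := gl 1 x y; rewrite !scale1r. Qed.

Lemma is_lin0 : g 0 = 0.
Proof. by apply/(addIr (g 0)); rewrite -is_linD !add0r. Qed.

Lemma is_linZ r x : g (r *: x) = r *: g x.
Proof. by rewrite -[r *: x]addr0 gl is_lin0 addr0. Qed.

Lemma is_linB x y : g (x - y) = g x - g y.
Proof. by rewrite -scaleN1r addrC gl scaleN1r addrC. Qed.

Lemma is_lin_sum (T : Type) (s : seq T) (F : T -> M) :
  g (\sum_(i <- s) F i) = \sum_(i <- s) g (F i).
Proof.
elim: s => [|i s IHs]; first by rewrite !big_nil is_lin0.
by rewrite !big_cons is_linD IHs.
Qed.
End IsLin.

Section ModuleQuotient.
Variables (S : comPzRingType) (M : lmodType S) (K : {pred M}).
Hypothesis KM : submod_closed K.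

Let K' : {pred M} := K.
HB.instance Definition _ := GRing.isZmodClosed.Build M K' (GRing.submod_closedB KM).

Local Open Scope quotient_scope.
Local Notation Q := (Quotient.quot K').

Definition modquot_scale (r : S) : Q -> Q := lift_op1 Q ( *:%R r).

Lemma pi_modquot_scale r : {morph \pi_Q : x / r *: x >-> modquot_scale r x}.
Proof.
move=> x; unlock modquot_scale; apply/eqP; rewrite piE Quotient.equivE -scalerBr.
have xK : x - repr (\pi_Q x) \in K' by rewrite Quotient.idealrBE reprK.
exact: (GRing.subsemimod_closedZ KM).
Qed.
Canonical pi_modquot_scale_morph r := PiMorph1 (pi_modquot_scale r).

Lemma modquot_scaleA a b q :
  modquot_scale a (modquot_scale b q) = modquot_scale (a * b) q.
Proof. by rewrite -[q]reprK !piE scalerA. Qed.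
Lemma modquot_scale1 : left_id 1 modquot_scale.
Proof. by move=> q; rewrite -[q]reprK !piE scale1r. Qed.
Lemma modquot_scaleDr : right_distributive modquot_scale +%R.
Proof. by move=> a p q; rewrite -[p]reprK -[q]reprK !piE scalerDr. Qed.
Lemma modquot_scaleDl q : {morph modquot_scale^~ q : a b / a + b}.
Proof. by move=> a b; rewrite -[q]reprK !piE scalerDl. Qed.

Definition modquot : Type := Q.
HB.instance Definition _ := GRing.Zmodule.on modquot.
HB.instance Definition _ := GRing.Zmodule_isLmodule.Build S modquot
  modquot_scaleA modquot_scale1 modquot_scaleDr modquot_scaleDl.

Definition modpi (x : M) : modquot := \pi_Q x.

Lemma modpi_is_lin : is_lin modpi.
Proof.
by move=> r x y; rewrite /modpi raddfD; congr (_ + _); apply: pi_modquot_scale.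
Qed.

Lemma modpiK (q : modquot) : modpi (repr q) = q.
Proof. exact: reprK. Qed.

Lemma modpi_eq x y : modpi x = modpi y <-> x - y \in K.
Proof.
rewrite -[_ \in K]/(_ \in K') Quotient.idealrBE.
by split=> [xy|/eqP //]; apply/eqP.
Qed.

Lemma modpi_eq0 x : modpi x = 0 <-> x \in K.
Proof. by rewrite -(is_lin0 modpi_is_lin) modpi_eq subr0. Qed.

Section Lift.
Variables (N : lmodType S) (phi : M -> N).
Hypotheses (phi_lin : is_lin phi) (phiK : {in K, forall x, phi x = 0}).

Definition modquot_lift (q : modquot) : N := phi (repr q).

Lemma modquot_liftE x : modquot_lift (modpi x) = phi x.
Proof.
apply/eqP; rewrite -subr_eq0 -(is_linB phi_lin) phiK //.
by apply/modpi_eq; rewrite modpiK.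
Qed.

Lemma modquot_lift_is_lin : is_lin modquot_lift.
Proof.
move=> r p q; rewrite -[p]modpiK -[q]modpiK -(modpi_is_lin r).
by rewrite !modquot_liftE phi_lin.
Qed.

Lemma modquot_lift_inj : (forall x, phi x = 0 -> x \in K) -> injective modquot_lift.
Proof.
move=> kerK p q; rewrite -[p]modpiK -[q]modpiK !modquot_liftE => /eqP.
by rewrite -subr_eq0 -(is_linB phi_lin) => /eqP/kerK/modpi_eq ->.
Qed.
End Lift.
End ModuleQuotient.

Arguments modquot_lift {S M K} KM {N} phi q.
Arguments modquot_lift_is_lin {S M K} KM {N phi}.
Arguments modquot_lift_inj {S M K} KM {N phi}.

Section PrincipalIdeals.
Variable S : comPzRingType.
Implicit Types a r t u : S.

Lemma principal_self a : principal a a.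
Proof. by exists 1; rewrite mul1r. Qed.

Lemma principalM a u : principal a (u * a).
Proof. by exists u. Qed.

(* Some u with y = u * a (junk 0 when y is not in aS). *)
Definition pcoef a (y : S) : S :=
  if pselect (principal a y) is left Hy then projT1 (cid Hy) else 0.

Lemma pcoefK a y : principal a y -> pcoef a y * a = y.
Proof. by rewrite /pcoef; case: pselect => // Hy _; rewrite -(projT2 (cid Hy)). Qed.

Lemma pcoef_unique a u : (pcoef a (u * a) - u) * a = 0.
Proof. by rewrite mulrBl (pcoefK (principalM a u)) subrr. Qed.

Section LinOn.
Variables (M : lmodType S) (a : S) (f : S -> M).
Hypothesis fl : lin_on a f.

Lemma lin_on0 : f 0 = 0.
Proof.
have := fl 1 (principalM a 0) (principalM a 0).
by rewrite mul0r mulr0 addr0 scale1r => /eqP; rewrite -subr_eq subrr eq_sym => /eqP.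
Qed.

Lemma lin_onZ r : f (r * a) = r *: f a.
Proof.
have := fl r (principal_self a) (principalM a 0).
by rewrite mul0r !addr0 lin_on0 addr0.
Qed.

Lemma lin_on_ann t : t * a = 0 -> t *: f a = 0.
Proof. by move=> ta; rewrite -lin_onZ ta lin_on0. Qed.
End LinOn.

Section KilledByAnn.
Variables (M : lmodType S) (a : S) (m : M).
Hypothesis m_ann : forall t, t * a = 0 -> t *: m = 0.

Lemma pcoef_self_scale : pcoef a a *: m = m.
Proof.
apply/eqP; rewrite -subr_eq0 -{2}[m]scale1r -scalerBl m_ann //.
by have := pcoef_unique a 1; rewrite mul1r.
Qed.

Lemma lin_on_pcoef : lin_on a (fun y => pcoef a y *: m).
Proof.
move=> r x y /pcoefK ex /pcoefK ey; rewrite -{1}ex -{1}ey mulrA -mulrDl.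
rewrite scalerA -scalerDl; apply/eqP; rewrite -subr_eq0 -scalerBl m_ann //.
exact: pcoef_unique.
Qed.
End KilledByAnn.

Lemma bilin_on_pcoef (N P : lmodType S) a (phi : N -> P) :
  is_lin phi -> (forall t n, t * a = 0 -> t *: phi n = 0) ->
  bilin_on a (fun n y => pcoef a y *: phi n).
Proof.
move=> phil phi_ann; split=> [y _ r n n'|n].
  by rewrite phil scalerDr !scalerA mulrC.
by apply: lin_on_pcoef => t /phi_ann.
Qed.

Lemma bilin_on_sum (N P : lmodType S) a (b : N -> S -> P) (s : seq (N * S)) :
  bilin_on a b -> (forall p, p \in s -> principal a p.2) ->
  \sum_(p <- s) b p.1 p.2 = b (\sum_(p <- s) pcoef a p.2 *: p.1) a.
Proof.
move=> [bl1 bl2]; have bal := bl1 a (principal_self a).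
elim: s => [|p s IHs] s_pr; first by rewrite !big_nil (is_lin0 bal).
rewrite !big_cons IHs => [|q sq]; last by apply: s_pr; rewrite inE sq orbT.
rewrite (is_linD bal) (is_linZ bal) -(lin_onZ (bl2 p.1)) pcoefK //.
by apply: s_pr; rewrite inE eqxx.
Qed.
End PrincipalIdeals.

Section PrincipalModules.
Variable S : comPzRingType.
Implicit Types a e r t : S.

Definition ann_gen a e : Prop := e * a = 0 /\ forall r, r * a = 0 -> r = r * e.

Definition pure_ann a : Prop :=
  forall r, r * a = 0 -> exists2 s, s * a = 0 & r = r * s.

Definition ann a : {pred S^o} := [pred t : S | t * a == 0].

Lemma ann_submod a : submod_closed (ann a).
Proof.
split=> [|r x y]; rewrite !inE ?mul0r // => /eqP xa /eqP ya.
by rewrite mulrDl -mulrA xa ya mulr0 addr0.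
Qed.

(* Lift the isomorphism aS ~ S/ann(a) along the projection S -> S/ann(a). *)
Lemma projective_principal_ann_gen a :
  projective_principal a -> exists e, ann_gen a e.
Proof.
move=> proj; pose g := modpi (ann_submod a).
have g_ann t : t * a = 0 -> t *: g 1 = 0.
  move=> ta; rewrite -(is_linZ (modpi_is_lin _)) modpi_eq0 inE.
  by rewrite -[_ *: _]/(t * 1) mulr1 ta.
have [h [hl gh]] := proj _ _ g _ (modpi_is_lin _)
  (fun q => ex_intro _ _ (modpiK q)) (lin_on_pcoef g_ann).
have ha : h a * a = a.
  move: (gh a (principal_self a)); rewrite -(is_linZ (modpi_is_lin _)) => /modpi_eq.
  rewrite inE -[_ *: _]/(pcoef a a * 1) mulr1 mulrBl subr_eq0 => /eqP ->.
  exact: pcoefK (principal_self a).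
exists (1 - h a); split=> [|r ra]; first by rewrite mulrBl mul1r ha subrr.
by rewrite mulrBr mulr1 -[r * h a]/(r *: (h a : S^o)) (lin_on_ann hl ra) subr0.
Qed.

Lemma ann_gen_projective_principal a e : ann_gen a e -> projective_principal a.
Proof.
move=> [ea ann_e] M N g f gl g_surj fl; have [n0 gn0] := g_surj (f a).
have e'_ann t : t * a = 0 -> t *: ((1 - e) *: n0) = 0.
  by move=> /ann_e te; rewrite scalerA mulrBr mulr1 -te subrr scale0r.
exists (fun y => pcoef a y *: ((1 - e) *: n0)); split; first exact: lin_on_pcoef.
move=> y /pcoefK {2}<-; rewrite scalerA !(is_linZ gl) gn0 -lin_onZ //.
by rewrite -mulrA mulrBl mul1r ea subr0.
Qed.

Lemma projective_principalP a : projective_principal a <-> exists e, ann_gen a e.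
Proof.
split; first exact: projective_principal_ann_gen.
by case=> e; apply: ann_gen_projective_principal.
Qed.

Definition annD r a : {pred S^o} :=
  [pred t : S | `[< exists2 p, p * r = 0 & (t - p) * a = 0 >]].

Lemma annD_submod r a : submod_closed (annD r a).
Proof.
split=> [|c x y]; first by apply/asboolP; exists 0; rewrite ?mul0r // subr0 mul0r.
move=> /asboolP[p pr xa] /asboolP[q qr ya]; apply/asboolP.
exists (c * p + q); first by rewrite mulrDl -mulrA pr qr mulr0 addr0.
rewrite -[c *: x]/(c * x) opprD addrACA -mulrBr mulrDl -mulrA xa ya.
by rewrite mulr0 addr0.
Qed.

(* S/ann(r) embeds in S by t |-> t r, and r (x) a = 1 (x) r a = 0 in S (x) aS.
   Flatness pulls this back to [1] (x) a = 0 in S/ann(r) (x) aS, which maps to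
   S/(ann(r) + ann(a)); hence 1 = p + q with p r = 0 and q a = 0. *)
Lemma flat_principal_pure_ann a : flat_principal a -> pure_ann a.
Proof.
move=> flat r ra.
pose phi (t : S^o) : S^o := t * r.
have phil : is_lin phi.
  by move=> c x y; rewrite /phi mulrDl -[c *: x]/(c * x) -mulrA.
have phi_ann t : phi t = 0 <-> t \in ann r by rewrite inE; split=> /eqP.
have phiK : {in ann r, forall t, phi t = 0} by move=> t /phi_ann.
have tz : tensor_zero a [:: (modpi (ann_submod r) 1, a)].
  apply: (flat _ _ _ (modquot_lift_is_lin _ phil phiK)).
  - exact: (modquot_lift_inj _ phil phiK (fun t => (phi_ann t).1)).
  - by move=> p; rewrite inE => /eqP ->; apply: principal_self.
  move=> P b [bl1 bl2]; rewrite big_seq1 /= (modquot_liftE _ phil phiK).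
  rewrite /phi mul1r -[r]mulr1 -[r * 1]/(r *: (1 : S^o)).
  by rewrite (is_linZ (bl1 a (principal_self a))) (lin_on_ann (bl2 1)).
pose J := annD_submod r a.
have rJ : {in ann r, forall t, modpi J t = 0}.
  by move=> t /eqP tr; apply/modpi_eq0/asboolP; exists t; rewrite ?subrr ?mul0r.
have J_ann t x : t * a = 0 -> t *: modpi J x = 0.
  move=> ta; rewrite -(is_linZ (modpi_is_lin J)) modpi_eq0; apply/asboolP.
  by exists 0; rewrite ?mul0r // subr0 -[_ *: _]/(t * x) mulrAC ta mul0r.
have psi_lin := modquot_lift_is_lin (ann_submod r) (modpi_is_lin J) rJ.
have := tz _ _ (bilin_on_pcoef psi_lin (fun t q => J_ann t (repr q))).
rewrite big_seq1 /= (modquot_liftE _ (modpi_is_lin J) rJ).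
rewrite (pcoef_self_scale (J_ann^~ 1)).
move=> /modpi_eq0 /asboolP[p pr pa]; exists (1 - p) => //.
by rewrite mulrBr mulr1 mulrC pr subr0.
Qed.

(* When ann(a) is pure, this is the submodule ann(a) N. *)
Definition ann_fixed (N : lmodType S) a : {pred N} :=
  [pred n | `[< exists2 s, s * a = 0 & s *: n = n >]].

Lemma ann_fixed_submod (N : lmodType S) a : submod_closed (@ann_fixed N a).
Proof.
split=> [|c x y]; first by apply/asboolP; exists 0; rewrite ?mul0r ?scaler0.
move=> /asboolP[s sa sx] /asboolP[u ua uy]; apply/asboolP.
exists (s + u - u * s).
  by rewrite mulrBl !mulrDl sa ua -mulrA sa mulr0 !addr0 subr0.
have fix_by t v (n : N) : v *: n = n -> (t + v - v * t) *: n = n.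
  by move=> vn; rewrite scalerBl scalerDl mulrC -scalerA vn addrAC subrr add0r.
rewrite scalerDr (fix_by s u y) // scalerA mulrC -scalerA.
by rewrite [s + u]addrC [u * s]mulrC fix_by.
Qed.

Lemma ann_fixedZ (N : lmodType S) a t (n : N) :
  pure_ann a -> t * a = 0 -> t *: n \in @ann_fixed N a.
Proof.
move=> pure /pure[s sa ts]; apply/asboolP; exists s => //.
by rewrite scalerA mulrC -ts.
Qed.

(* Every tensor in N' (x) aS has the form m (x) a.  The bilinear map
   n (x) a |-> [n] into N/ann(a)N sends iota m (x) a to [iota m], so
   iota m = s iota m with s a = 0; by injectivity m = s m, and then
   m (x) a = m (x) s a = 0. *)
Lemma pure_ann_flat_principal a : pure_ann a -> flat_principal a.
Proof.
move=> pure N' N iota il ii s s_pr tz P b bl.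
rewrite (bilin_on_sum bl s_pr); set m := \sum_(p <- s) _.
pose K := ann_fixed_submod N a.
have K_ann t n : t * a = 0 -> t *: modpi K n = 0.
  by move=> ta; rewrite -(is_linZ (modpi_is_lin K)) modpi_eq0 ann_fixedZ.
have bK := bilin_on_pcoef (modpi_is_lin K) K_ann.
have := tz _ _ bK.
rewrite (bilin_on_sum bK) => [|p /mapP[q sq ->]]; last exact: s_pr.
rewrite big_map (pcoef_self_scale (fun t => K_ann t _)) /=.
have -> : \sum_(p <- s) pcoef a p.2 *: iota p.1 = iota m.
  by rewrite (is_lin_sum il); apply: eq_bigr => p _; rewrite (is_linZ il).
move=> /modpi_eq0 /asboolP[u ua um].
have mu : u *: m = m by apply: ii; rewrite (is_linZ il).
by rewrite -mu (is_linZ (bl.1 a (principal_self a))) (lin_on_ann (bl.2 m) ua).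
Qed.

Lemma flat_principalP a : flat_principal a <-> pure_ann a.
Proof.
by split; [apply: flat_principal_pure_ann | apply: pure_ann_flat_principal].
Qed.
End PrincipalModules.

Lemma dfun_choice (T : Type) (U : T -> Type) (P : forall t, U t -> Prop) :
  (forall t, exists u, P t u) -> exists f : forall t, U t, forall t, P t (f t).
Proof. by move=> H; exists (fun t => projT1 (cid (H t))) => t; apply: projT2. Qed.

Section QuotientByIstar.
Variables (X : Type) (R : X -> comPzRingType) (I : PX_ideal X).
Implicit Types a e f g r s : dprod R.
Local Notation pi := (piIstar I).

Lemma piIstar_surj (A : quotIstar R I) : exists f, pi f = A.
Proof. by exists (repr A); rewrite /piIstar reprK. Qed.

Lemma piIstarM f g : pi (f * g) = pi f * pi g.
Proof. exact: pi_qmul. Qed.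

Lemma piIstarB f g : pi (f - g) = pi f - pi g.
Proof. exact: raddfB. Qed.

Lemma piIstar_eq0 f : pi f = 0 <-> PX_set I (Su f).
Proof.
have := Quotient.idealrBE (Istar I) f 0; rewrite subr0 IstarE => fI.
have pi0 : pi 0 = 0 := raddf0 _.
split=> [f0|/asboolP]; last by rewrite fI => /eqP; rewrite -/(pi f) -/(pi 0) pi0.
by apply/asboolP; rewrite fI; apply/eqP; rewrite -/(pi f) -/(pi 0) f0 pi0.
Qed.

Lemma piIstar_eq0_sub f g :
  pi g = 0 -> (forall x, g x = 0 -> f x = 0) -> pi f = 0.
Proof.
move=> /piIstar_eq0 Ig gf; apply/piIstar_eq0; apply: PX_ideal_sub Ig => x.
by apply: contra => /eqP/gf ->.
Qed.

Lemma piIstar_ann a s : (forall x, s x * a x = 0) -> pi s * pi a = 0.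
Proof.
move=> sa; rewrite -piIstarM; apply: (piIstar_eq0_sub (g := 0)) => [|x _].
  exact: raddf0.
by rewrite dprod_mulE sa.
Qed.

Lemma piIstar_fix a r s : pi r * pi a = 0 ->
  (forall x, r x * a x = 0 -> r x = r x * s x) -> pi r = pi r * pi s.
Proof.
rewrite -!piIstarM => ra rs; apply/eqP; rewrite -subr_eq0 -piIstarB; apply/eqP.
apply: piIstar_eq0_sub ra _ => x rxa.
by rewrite dprod_addE dprod_oppE dprod_mulE -rs ?subrr.
Qed.

Lemma ann_gen_piIstar a e :
  (forall x, ann_gen (a x) (e x)) -> ann_gen (pi a) (pi e).
Proof.
move=> ae; split; first by apply: piIstar_ann => x; case: (ae x).
move=> r'; have [r <-] := piIstar_surj r' => ra.
by apply: piIstar_fix ra _ => x; case: (ae x) => _; apply.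
Qed.

Lemma pure_ann_piIstar a : (forall x, pure_ann (a x)) -> pure_ann (pi a).
Proof.
move=> pure r'; have [r <-] := piIstar_surj r' => ra.
have rs_x x : exists s : R x, s * a x = 0 /\ (r x * a x = 0 -> r x = r x * s).
  case: (pselect (r x * a x = 0)) => [/(pure x)[s sa rs]|nra]; first by exists s.
  by exists 0; split=> [|/nra //]; rewrite mul0r.
have [s rs] := dfun_choice rs_x.
exists (pi s); first by apply: piIstar_ann => x; case: (rs x).
by apply: piIstar_fix ra _ => x; case: (rs x) => _; apply.
Qed.
End QuotientByIstar.

Theorem proposition6p3 (X : Type) (R : X -> comPzRingType) (I : PX_ideal X) :
  ((forall x : X, pp_ring (R x)) -> pp_ring (quotIstar R I)) /\
  ((forall x : X, pf_ring (R x)) -> pf_ring (quotIstar R I)).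
Proof.
split=> [pp|pf] A; have [a <-] := piIstar_surj A.
  have ae_x x : exists e, ann_gen (a x) e by apply/projective_principalP/pp.
  have [e ae] := dfun_choice ae_x.
  by apply/projective_principalP; exists (piIstar I e); apply: ann_gen_piIstar.
by apply/flat_principalP/pure_ann_piIstar => x; apply/flat_principalP/pf.
Qed.
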